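(* For each $\chi\in Y'$, $\mathcal{A}^{\rm hom}_\chi=(iX_\chi)^*\mathbb{A}^{\rm hom}(iX_\chi)$, where $\mathbb{A}^{\rm hom}$ is the homogenized tensor. In particular, there is a constant $\nu_1>0$, depending only on $\nu_{\rm hom}$, $c_{\rm symrk1}$ and $C_{\rm symrk1}$, such that $\nu_1|\chi|^2|c|^2\le\langle\mathcal{A}^{\rm hom}_\chi c,c\rangle_{\mathbb{C}^3}\le\nu_1^{-1}|\chi|^2|c|^2$ for all $c\in\mathbb{C}^3$ and $\chi\in Y'$.
   Context: $Y=[0,1)^3$, $Y'=[-\pi,\pi)^3$. The tensor $\mathbb{A}$ is $\mathbb{Z}^3$-periodic, real, with entries in $L^\infty(Y)$, satisfies $\mathbb{A}^{ik}_{jl}=\mathbb{A}^{jk}_{il}=\mathbb{A}^{ki}_{lj}$ and $\nu|\xi|^2\le\mathbb{A}(y)\xi:\xi\le\nu^{-1}|\xi|^2$ for real symmetric $\xi$. $X_\chi c=\operatorname{sym}(c\chi^\top)$, viewed as a map $\mathbb{C}^3\to\mathbb{C}^{3\times3}$ (Frobenius inner product). $\mathcal{A}^{\rm hom}_\chi\in\mathbb{C}^{3\times3}$ is defined by $\langle\mathcal{A}^{\rm hom}_\chi c,d\rangle=\int_Y\mathbb{A}(\operatorname{sym}\nabla u_c+iX_\chi c):\overline{iX_\chi d}$, where $u_c\in H^1_\#(Y;\mathbb{C}^3)$ is the mean-zero solution of $\int_Y\mathbb{A}(\operatorname{sym}\nabla u_c+iX_\chi c):\overline{\operatorname{sym}\nabla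 v}=0$ for all periodic $v\in H^1_\#(Y;\mathbb{C}^3)$. Homogenized tensor: for real symmetric $\xi$, $u^\xi\in H^1_\#(Y;\mathbb{R}^3)$ is the mean-zero solution of $\int_Y\mathbb{A}(\xi+\operatorname{sym}\nabla u^\xi):\operatorname{sym}\nabla v=0$ for all $v\in H^1_\#(Y;\mathbb{R}^3)$, and $\mathbb{A}^{\rm hom}$ is the constant tensor with $\mathbb{A}^{\rm hom}\xi:\zeta=\int_Y\mathbb{A}(\xi+\operatorname{sym}\nabla u^\xi):\zeta$; it satisfies $\nu_{\rm hom}|\xi|^2\le\mathbb{A}^{\rm hom}\xi:\xi\le\nu_{\rm hom}^{-1}|\xi|^2$ for some $\nu_{\rm hom}>0$. The constants $c_{\rm symrk1},C_{\rm symrk1}>0$ satisfy $c_{\rm symrk1}|\chi|\|u\|_{L^2}\le\|X_\chi u\|_{L^2}\le C_{\rm symrk1}|\chi|\|u\|_{L^2}$. *)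

From HB Require Import structures.
From mathcomp Require Import all_boot all_order all_algebra.
From mathcomp Require Import all_classical all_reals all_analysis.
From mathcomp Require Import complex.
Set Implicit Arguments. Unset Strict Implicit. Unset Printing Implicit Defensive.
Import Order.TTheory GRing.Theory Num.Theory.
Import numFieldNormedType.Exports.
Local Open Scope classical_set_scope.
Local Open Scope ring_scope.

Section Defs.
Variable R : realType.
Local Notation C := (complex R).

Definition toC (r : R) : C := Complex r 0.
Definition iC : C := Complex 0 1.
Definition cconj (z : C) : C := Complex (complex.Re z) (- complex.Im z).
Definition cabs2 (z : C) : R := complex.Re z ^+ 2 + complex.Im z ^+ 2.

Definition pt := ((R * R) * R)%type.
Definition coord (y : pt) (j : 'I_3) : R :=
  match val j with 0%N => y.1.1 | 1%N => y.1.2 | _ => y.2 end.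
Definition pt_of (x : 'I_3 -> R) : pt := ((x ord0, x (lift ord0 ord0)), x ord_max).
Definition edir (j : 'I_3) : pt := pt_of (fun k => if k == j then 1 else 0).
Definition shift (y : pt) (m : 'I_3 -> int) : pt := pt_of (fun k => coord y k + (m k)%:~R).
Definition Zperiodic (T : Type) (f : pt -> T) := forall y m, f (shift y m) = f y.

Definition Ycell : set pt := [set y | forall j, 0 <= coord y j < 1].
Definition in_Yprime (chi : 'cV[R]_3) : Prop := forall j, - pi <= chi j 0 < pi.

Definition leb3 := ((@lebesgue_measure R \x @lebesgue_measure R) \x @lebesgue_measure R)%E.

Definition Rint (f : pt -> R) : R := Rintegral leb3 Ycell f.
Definition Cint (f : pt -> C) : C :=
  toC (Rint (fun y => complex.Re (f y))) + iC * toC (Rint (fun y => complex.Im (f y))).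

Definition L2R (f : pt -> R) : Prop :=
  measurable_fun Ycell f /\ leb3.-integrable Ycell (fun y => ((f y) ^+ 2)%:E).
Definition L2C (f : pt -> C) : Prop :=
  L2R (fun y => complex.Re (f y)) /\ L2R (fun y => complex.Im (f y)).

Definition C1per (phi : pt -> R) : Prop :=
  Zperiodic phi /\ continuous phi /\
  forall j, (forall y, derivable phi y (edir j)) /\ continuous (fun y => 'D_(edir j) phi y).

(* H^1_#(Y;C^3): u with weak gradient G, (G y) k j = d_j u_k (y) *)
Definition H1perC (u : pt -> 'cV[C]_3) (G : pt -> 'M[C]_3) : Prop :=
  (forall k, L2C (fun y => u y k 0)) /\ (forall k j, L2C (fun y => G y k j)) /\
  forall phi, C1per phi -> forall k j,
    Cint (fun y => u y k 0 * toC ('D_(edir j) phi y)) = - Cint (fun y => G y k j * toC (phi y)).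

Definition H1perR (u : pt -> 'cV[R]_3) (G : pt -> 'M[R]_3) : Prop :=
  (forall k, L2R (fun y => u y k 0)) /\ (forall k j, L2R (fun y => G y k j)) /\
  forall phi, C1per phi -> forall k j,
    Rint (fun y => u y k 0 * 'D_(edir j) phi y) = - Rint (fun y => G y k j * phi y).

Definition symC (x : 'M[C]_3) : 'M[C]_3 := (toC 2)^-1 *: (x + x^T).
Definition symR (x : 'M[R]_3) : 'M[R]_3 := 2^-1 *: (x + x^T).
Definition conjM (x : 'M[C]_3) : 'M[C]_3 := map_mx cconj x.
Definition ddotC (x z : 'M[C]_3) : C := \sum_i \sum_j x i j * z i j.
Definition ddotR (x z : 'M[R]_3) : R := \sum_i \sum_j x i j * z i j.
Definition frobC (x z : 'M[C]_3) : C := ddotC x (conjM z).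
Definition frobR2 (x : 'M[R]_3) : R := ddotR x x.
Definition dotC (c d : 'cV[C]_3) : C := \sum_k c k 0 * cconj (d k 0).
Definition normC2 (c : 'cV[C]_3) : R := \sum_k cabs2 (c k 0).
Definition normR2 (x : 'cV[R]_3) : R := \sum_k x k 0 ^+ 2.

Definition Xchi (chi : 'cV[R]_3) (c : 'cV[C]_3) : 'M[C]_3 :=
  symC (c *m (map_mx toC chi)^T).
Definition iX (chi : 'cV[R]_3) (c : 'cV[C]_3) : 'M[C]_3 := iC *: Xchi chi c.
(* adjoint (iX_chi)^* : C^{3x3} -> C^3 w.r.t. Frobenius / standard inner products:
   ((iX)^* z)_k = < z , iX e_k >_F *)
Definition iXadj (chi : 'cV[R]_3) (z : 'M[C]_3) : 'cV[C]_3 :=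
  \col_k frobC z (iX chi (delta_mx k 0)).

(* a tensor T is stored as T i k j l = T^{ik}_{jl}, acting as (T xi)_{ij} = sum_{kl} T^{ik}_{jl} xi_{kl} *)
Definition tensor := 'I_3 -> 'I_3 -> 'I_3 -> 'I_3 -> R.
Definition tappC (T : tensor) (x : 'M[C]_3) : 'M[C]_3 :=
  \matrix_(i, j) \sum_k \sum_l toC (T i k j l) * x k l.
Definition tappR (T : tensor) (x : 'M[R]_3) : 'M[R]_3 :=
  \matrix_(i, j) \sum_k \sum_l T i k j l * x k l.

Definition admissible_tensor (A : pt -> tensor) (nu : R) : Prop :=
  0 < nu /\
  (forall i k j l, Zperiodic (fun y => A y i k j l)) /\
  (forall i k j l, measurable_fun Ycell (fun y => A y i k j l)) /\
  (exists M : R, {ae leb3, forall y, Ycell y -> forall i k j l, `|A y i k j l| <= M}) /\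
  {ae leb3, forall y, Ycell y ->
     (forall i k j l, A y i k j l = A y j k i l /\ A y i k j l = A y k i l j) /\
     (forall xi : 'M[R]_3, xi^T = xi ->
        nu * frobR2 xi <= ddotR (tappR (A y) xi) xi <= nu^-1 * frobR2 xi)}.

Definition real_corrector (A : pt -> tensor) (xi : 'M[R]_3)
    (u : pt -> 'cV[R]_3) (G : pt -> 'M[R]_3) : Prop :=
  H1perR u G /\ (forall k, Rint (fun y => u y k 0) = 0) /\
  forall v Gv, H1perR v Gv ->
    Rint (fun y => ddotR (tappR (A y) (xi + symR (G y))) (symR (Gv y))) = 0.

Definition is_Ahom (A : pt -> tensor) (Ahom : tensor) : Prop :=
  forall xi : 'M[R]_3, xi^T = xi -> forall u G, real_corrector A xi u G ->
    forall zeta : 'M[R]_3,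
      ddotR (tappR Ahom xi) zeta = Rint (fun y => ddotR (tappR (A y) (xi + symR (G y))) zeta).

Definition chi_corrector (A : pt -> tensor) (chi : 'cV[R]_3) (c : 'cV[C]_3)
    (u : pt -> 'cV[C]_3) (G : pt -> 'M[C]_3) : Prop :=
  H1perC u G /\ (forall k, Cint (fun y => u y k 0) = 0) /\
  forall v Gv, H1perC v Gv ->
    Cint (fun y => ddotC (tappC (A y) (symC (G y) + iX chi c)) (conjM (symC (Gv y)))) = 0.

Definition Ahom_chi_form (A : pt -> tensor) (chi : 'cV[R]_3) (c d : 'cV[C]_3)
    (G : pt -> 'M[C]_3) : C :=
  Cint (fun y => ddotC (tappC (A y) (symC (G y) + iX chi c)) (conjM (iX chi d))).

Definition L2normC3 (u : pt -> 'cV[C]_3) : R := Num.sqrt (Rint (fun y => normC2 (u y))).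
Definition L2normCM (x : pt -> 'M[C]_3) : R :=
  Num.sqrt (Rint (fun y => \sum_i \sum_j cabs2 (x y i j))).

End Defs.

(** Write [iX_chi c = P + i Q] with [P], [Q] real symmetric matrices.  Taking
    real and imaginary parts, the complex cell problem for [u_c] splits into
    the real cell problems of homogenization: [Re u_c] is the corrector of [P]
    and [Im u_c] the corrector of [Q].  Hence the real and imaginary parts of
    [<A^hom_chi c, d>] are [A^hom P : Re(iX d) + A^hom Q : Im(iX d)] and
    [A^hom Q : Re(iX d) - A^hom P : Im(iX d)], i.e. [<(iX)^* A^hom iX c, d>].
    For [d = c] the imaginary part vanishes since [A^hom] is symmetric on
    matrices with correctors ([A^hom xi : zeta] is the energy
    [int A (xi + e(u^xi)) : (zeta + e(u^zeta))], symmetric by the symmetry of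
    [A]), and the real part [A^hom P : P + A^hom Q : Q] is comparable to
    [|P|^2 + |Q|^2 = |X_chi c|^2], which the rank-one bounds, applied to the
    constant field [c], compare with [|chi|^2 |c|^2]. *)

From Pilot Require Import Defs.
From HB Require Import structures.
From mathcomp Require Import all_boot all_order all_algebra.
From mathcomp Require Import all_classical all_reals all_analysis.
From mathcomp Require Import complex measurable_realfun ring lra.
Import Order.TTheory GRing.Theory Num.Theory.
Import numFieldNormedType.Exports.
Local Open Scope classical_set_scope.
Local Open Scope ring_scope.
Set Implicit Arguments. Unset Strict Implicit. Unset Printing Implicit Defensive.

Section CellProblems.
Variable R : realType.
Local Notation C := (complex R).
Local Notation Re := (@complex.Re R).
Local Notation Im := (@complex.Im R).
Local Notation ReM := (map_mx Re).
Local Notation ImM := (map_mx Im).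
Local Notation mu := (@leb3 R).
Local Notation Y := (@Ycell R).
Local Notation Yintegrable f := (mu.-integrable Y (EFin \o f)).
Implicit Types (chi : 'cV[R]_3) (c d : 'cV[C]_3) (f g h : pt R -> R).

(** * Real and imaginary parts *)

Lemma complex_ext (z w : C) : Re z = Re w -> Im z = Im w -> z = w.
Proof. by case: z; case: w => /= ? ? ? ? -> ->. Qed.

Lemma cconjE (z : C) : cconj z = conjc z.
Proof. by case: z. Qed.

Lemma ReN (z : C) : Re (- z) = - Re z.
Proof. by case: z. Qed.

Lemma ImN (z : C) : Im (- z) = - Im z.
Proof. by case: z. Qed.

Lemma Re_mul_toC (z : C) r : Re (z * toC r) = Re z * r.
Proof. by case: z => a b /=; rewrite mulr0 subr0. Qed.

Lemma Im_mul_toC (z : C) r : Im (z * toC r) = Im z * r.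
Proof. by case: z => a b /=; rewrite mulr0 add0r. Qed.

Lemma Re_toC_mul r (z : C) : Re (toC r * z) = r * Re z.
Proof. by case: z => a b /=; rewrite mul0r subr0. Qed.

Lemma Im_toC_mul r (z : C) : Im (toC r * z) = r * Im z.
Proof. by case: z => a b /=; rewrite mul0r addr0. Qed.

Lemma Re_mul_cconj (z w : C) : Re (z * cconj w) = Re z * Re w + Im z * Im w.
Proof. by case: z w => a b [c d] /=; ring. Qed.

Lemma Im_mul_cconj (z w : C) : Im (z * cconj w) = Im z * Re w - Re z * Im w.
Proof. by case: z w => a b [c d] /=; ring. Qed.

Lemma cabs2_iC_mul (z : C) : cabs2 (iC R * z) = cabs2 z.
Proof. by case: z => a b; rewrite /cabs2 /= !mul0r !mul1r sub0r add0r sqrrN addrC. Qed.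

Lemma toC_inv2 : (toC (2 : R))^-1 = toC 2^-1.
Proof. by rewrite (_ : @toC R = real_complex R) // fmorphV. Qed.

Lemma Re_Cint (f : pt R -> C) : Re (Cint f) = Defs.Rint (fun y => Re (f y)).
Proof. rewrite /Cint /=; ring. Qed.

Lemma Im_Cint (f : pt R -> C) : Im (Cint f) = Defs.Rint (fun y => Im (f y)).
Proof. rewrite /Cint /=; ring. Qed.

Lemma ReM_tappC T Z : ReM (tappC T Z) = tappR T (ReM Z).
Proof.
apply/matrixP => i j; rewrite !mxE raddf_sum; apply: eq_bigr => k _.
by rewrite raddf_sum; apply: eq_bigr => l _; rewrite /= Re_toC_mul mxE.
Qed.

Lemma ImM_tappC T Z : ImM (tappC T Z) = tappR T (ImM Z).
Proof.
apply/matrixP => i j; rewrite !mxE raddf_sum; apply: eq_bigr => k _.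
by rewrite raddf_sum; apply: eq_bigr => l _; rewrite /= Im_toC_mul mxE.
Qed.

Lemma ReM_symC (Z : 'M[C]_3) : ReM (symC Z) = symR (ReM Z).
Proof. by apply/matrixP => i j; rewrite !mxE toC_inv2 Re_toC_mul raddfD. Qed.

Lemma ImM_symC (Z : 'M[C]_3) : ImM (symC Z) = symR (ImM Z).
Proof. by apply/matrixP => i j; rewrite !mxE toC_inv2 Im_toC_mul raddfD. Qed.

Lemma ReM_symC_add (X Z : 'M[C]_3) : ReM (symC X + Z) = ReM Z + symR (ReM X).
Proof. by rewrite map_mxD ReM_symC addrC. Qed.

Lemma ImM_symC_add (X Z : 'M[C]_3) : ImM (symC X + Z) = ImM Z + symR (ImM X).
Proof. by rewrite map_mxD ImM_symC addrC. Qed.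

Lemma ReM_toC (W : 'M[R]_3) : ReM (map_mx (@toC R) W) = W.
Proof. by apply/matrixP => i j; rewrite !mxE. Qed.

Lemma ImM_toC (W : 'M[R]_3) : ImM (map_mx (@toC R) W) = 0.
Proof. by apply/matrixP => i j; rewrite !mxE. Qed.

Lemma symC_toC (W : 'M[R]_3) : symC (map_mx (@toC R) W) = map_mx (@toC R) (symR W).
Proof.
apply/matrixP => i j; rewrite !mxE toC_inv2.
by apply: complex_ext; rewrite /= ?Re_toC_mul ?Im_toC_mul /=; ring.
Qed.

Lemma Re_ddotC_conjM X Z :
  Re (ddotC X (conjM Z)) = ddotR (ReM X) (ReM Z) + ddotR (ImM X) (ImM Z).
Proof.
rewrite /ddotR raddf_sum -big_split; apply: eq_bigr => i _.
rewrite raddf_sum -big_split; apply: eq_bigr => j _.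
by rewrite !mxE /= Re_mul_cconj.
Qed.

Lemma Im_ddotC_conjM X Z :
  Im (ddotC X (conjM Z)) = ddotR (ImM X) (ReM Z) - ddotR (ReM X) (ImM Z).
Proof.
rewrite /ddotR raddf_sum -sumrB; apply: eq_bigr => i _.
rewrite raddf_sum -sumrB; apply: eq_bigr => j _.
by rewrite !mxE /= Im_mul_cconj.
Qed.

Lemma ddotR0r (x : 'M[R]_3) : ddotR x 0 = 0.
Proof. by rewrite /ddotR big1 // => i _; rewrite big1 // => j _; rewrite mxE mulr0. Qed.

Lemma Re_ddotC_toC T Z (W : 'M[R]_3) :
  Re (ddotC (tappC T Z) (conjM (symC (map_mx (@toC R) W)))) = ddotR (tappR T (ReM Z)) (symR W).
Proof. by rewrite Re_ddotC_conjM ReM_tappC ImM_tappC symC_toC ReM_toC ImM_toC ddotR0r addr0. Qed.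

Lemma Im_ddotC_toC T Z (W : 'M[R]_3) :
  Im (ddotC (tappC T Z) (conjM (symC (map_mx (@toC R) W)))) = ddotR (tappR T (ImM Z)) (symR W).
Proof. by rewrite Im_ddotC_conjM ReM_tappC ImM_tappC symC_toC ReM_toC ImM_toC ddotR0r subr0. Qed.

Lemma ddotC_conjM_diag (T : tensor R) (Z : 'M[C]_3) :
  ddotR (tappR T (ReM Z)) (ImM Z) = ddotR (tappR T (ImM Z)) (ReM Z) ->
  ddotC (tappC T Z) (conjM Z) =
  toC (ddotR (tappR T (ReM Z)) (ReM Z) + ddotR (tappR T (ImM Z)) (ImM Z)).
Proof.
move=> Tsym; apply: complex_ext; first by rewrite Re_ddotC_conjM ReM_tappC ImM_tappC.
by rewrite Im_ddotC_conjM ReM_tappC ImM_tappC Tsym subrr.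
Qed.

Lemma frobR2_ReM_ImM (Z : 'M[C]_3) :
  frobR2 (ReM Z) + frobR2 (ImM Z) = \sum_i \sum_j cabs2 (Z i j).
Proof.
rewrite /frobR2 /ddotR -big_split; apply: eq_bigr => i _.
by rewrite -big_split; apply: eq_bigr => j _; rewrite !mxE /cabs2 !expr2.
Qed.

(** * Tensors and the symbol [iX_chi] *)

Lemma ddotRDr (x y z : 'M[R]_3) : ddotR x (y + z) = ddotR x y + ddotR x z.
Proof.
rewrite /ddotR -big_split; apply: eq_bigr => i _.
by rewrite -big_split; apply: eq_bigr => j _; rewrite mxE mulrDr.
Qed.

Lemma ddotR_tappR_pairE (T : tensor R) x z :
  ddotR (tappR T x) z =
  \sum_(p : 'I_3 * 'I_3) \sum_(q : 'I_3 * 'I_3) T p.1 q.1 p.2 q.2 * x q.1 q.2 * z p.1 p.2.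
Proof.
rewrite /ddotR pair_bigA; apply: eq_bigr => -[i j] _.
by rewrite mxE pair_bigA big_distrl.
Qed.

Lemma ddotR_tappR_swap (T : tensor R) x z :
  (forall i k j l, T i k j l = T k i l j) ->
  ddotR (tappR T x) z = ddotR (tappR T z) x.
Proof.
move=> Tsym; rewrite !ddotR_tappR_pairE exchange_big.
by apply: eq_bigr => p _; apply: eq_bigr => q _; rewrite Tsym mulrAC.
Qed.

Lemma coercive_ReM_ImM (T : tensor R) (nuT : R) (Z : 'M[C]_3) :
  (forall xi : 'M[R]_3, xi^T = xi ->
     nuT * frobR2 xi <= ddotR (tappR T xi) xi <= nuT^-1 * frobR2 xi) ->
  Z^T = Z ->
  nuT * \sum_i \sum_j cabs2 (Z i j)
    <= ddotR (tappR T (ReM Z)) (ReM Z) + ddotR (tappR T (ImM Z)) (ImM Z)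
    <= nuT^-1 * \sum_i \sum_j cabs2 (Z i j).
Proof.
move=> Tcoer Zsym; rewrite -frobR2_ReM_ImM !mulrDr.
have /andP[Re_lo Re_up] : nuT * frobR2 (ReM Z) <= ddotR (tappR T (ReM Z)) (ReM Z)
    <= nuT^-1 * frobR2 (ReM Z) by apply: Tcoer; rewrite map_trmx Zsym.
have /andP[Im_lo Im_up] : nuT * frobR2 (ImM Z) <= ddotR (tappR T (ImM Z)) (ImM Z)
    <= nuT^-1 * frobR2 (ImM Z) by apply: Tcoer; rewrite map_trmx Zsym.
by rewrite !lerD.
Qed.

Lemma symC_sym (Z : 'M[C]_3) : (symC Z)^T = symC Z.
Proof. by apply/matrixP => i j; rewrite !mxE addrC. Qed.

Lemma symCD (x z : 'M[C]_3) : symC (x + z) = symC x + symC z.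
Proof. by apply/matrixP => i j; rewrite !mxE; ring. Qed.

Lemma symCZ a (x : 'M[C]_3) : symC (a *: x) = a *: symC x.
Proof. by apply/matrixP => i j; rewrite !mxE; ring. Qed.

Lemma iX_sym chi c : (iX chi c)^T = iX chi c.
Proof. by rewrite /iX linearZ /= symC_sym. Qed.

Lemma ReM_iX_sym chi c : (ReM (iX chi c))^T = ReM (iX chi c).
Proof. by rewrite map_trmx iX_sym. Qed.

Lemma ImM_iX_sym chi c : (ImM (iX chi c))^T = ImM (iX chi c).
Proof. by rewrite map_trmx iX_sym. Qed.

Lemma iXD chi (x z : 'cV[C]_3) : iX chi (x + z) = iX chi x + iX chi z.
Proof. by rewrite /iX /Xchi mulmxDl symCD scalerDr. Qed.

Lemma iXZ chi a (x : 'cV[C]_3) : iX chi (a *: x) = a *: iX chi x.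
Proof. by rewrite /iX /Xchi -scalemxAl symCZ !scalerA [iC R * a]mulrC. Qed.

Lemma iX0 chi : iX chi 0 = 0.
Proof. by rewrite -(scale0r 0) iXZ scale0r. Qed.

Lemma frobCD (z x w : 'M[C]_3) : frobC z (x + w) = frobC z x + frobC z w.
Proof.
rewrite /frobC /ddotC -big_split; apply: eq_bigr => i _.
rewrite -big_split; apply: eq_bigr => j _.
by rewrite !mxE !cconjE rmorphD mulrDr.
Qed.

Lemma frobCZ (z x : 'M[C]_3) a : frobC z (a *: x) = cconj a * frobC z x.
Proof.
rewrite /frobC /ddotC mulr_sumr; apply: eq_bigr => i _.
rewrite mulr_sumr; apply: eq_bigr => j _.
by rewrite !mxE !cconjE rmorphM mulrCA.
Qed.

Lemma frobC0 (z : 'M[C]_3) : frobC z 0 = 0.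
Proof. by rewrite -(scale0r 0) frobCZ cconjE rmorph0 mul0r. Qed.

Lemma dotC_iXadj chi (z : 'M[C]_3) d :
  dotC (iXadj chi z) d = ddotC z (conjM (iX chi d)).
Proof.
have iX_delta : iX chi d = \sum_k d k 0 *: iX chi (delta_mx k 0).
  rewrite {1}(matrix_sum_delta d) (big_morph _ (iXD chi) (iX0 chi)).
  by apply: eq_bigr => k _; rewrite big_ord1 iXZ.
rewrite -/(frobC z _) iX_delta (big_morph _ (frobCD z) (frobC0 z)).
by apply: eq_bigr => k _; rewrite frobCZ mxE mulrC.
Qed.

Lemma sum_cabs2_iX chi c :
  \sum_i \sum_j cabs2 (iX chi c i j) = \sum_i \sum_j cabs2 (Xchi chi c i j).
Proof. by apply: eq_bigr => i _; apply: eq_bigr => j _; rewrite mxE cabs2_iC_mul. Qed.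

(** * Integration over the unit cell *)

Lemma Ycell_itv : Y = ([set` `[0, 1[] `*` [set` `[0, 1[]) `*` [set` `[0 : R, 1[].
Proof.
apply/seteqP; split => [[[a b] c] /= Yabc | [[a b] c] [[/= ha hb] hc] j].
  by rewrite !in_itv; split; [split|];
    [exact: (Yabc ord0) | exact: (Yabc (lift ord0 ord0)) | exact: (Yabc ord_max)].
by rewrite !in_itv /= in ha hb hc; case: j => [[|[|[|//]]] ?].
Qed.

(* The carrier of [leb3] is built from [measurableTypeR R], not from the Borel
   structure of [R]. *)
Lemma measurable_Ycell :
  measurable (Y : set ((measurableTypeR R * measurableTypeR R) * measurableTypeR R)).
Proof. by rewrite Ycell_itv; apply: measurableX; [apply: measurableX|]; exact: measurable_itv. Qed.

Lemma leb3_Ycell : mu Y = 1%E.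
Proof.
have itv01 : (@lebesgue_measure R `[0%R, 1%R[ = 1)%E.
  by rewrite lebesgue_measure_itv /= lte_fin ltr01 /= sube0.
rewrite Ycell_itv /leb3 !product_measure1E; try exact: measurable_itv.
  rewrite /= product_measure1E; try exact: measurable_itv.
  by rewrite -[RHS]mule1 -[RHS]mule1; congr (_ * _ * _)%E; exact: itv01.
by apply: measurableX; exact: measurable_itv.
Qed.

Lemma Rint_ext f g : f =1 g -> Defs.Rint f = Defs.Rint g.
Proof. by move=> /funext ->. Qed.

Lemma Rint_cst k : Defs.Rint (fun _ : pt R => k) = k.
Proof.
rewrite /Defs.Rint (Rintegral_cst _ measurable_Ycell).
by rewrite (_ : fine (mu Y) = 1) ?mulr1 // leb3_Ycell.
Qed.

Lemma RintD f g : Yintegrable f -> Yintegrable g ->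
  Defs.Rint (fun y => f y + g y) = Defs.Rint f + Defs.Rint g.
Proof. by move=> fi gi; rewrite /Defs.Rint RintegralD //; exact: measurable_Ycell. Qed.

Lemma RintB f g : Yintegrable f -> Yintegrable g ->
  Defs.Rint (fun y => f y - g y) = Defs.Rint f - Defs.Rint g.
Proof. by move=> fi gi; rewrite /Defs.Rint RintegralB //; exact: measurable_Ycell. Qed.

Lemma Rint_ae_ext f g : Yintegrable f -> Yintegrable g ->
  {ae mu, forall y, Y y -> f y = g y} -> Defs.Rint f = Defs.Rint g.
Proof.
move=> fi gi fg; rewrite /Defs.Rint /Rintegral; congr fine.
apply: ae_eq_integral; [exact: measurable_Ycell|exact: measurable_int fi|exact: measurable_int gi|].
by apply: (@filterS _ _ (ae_filter_ringOfSetsType mu) _ _ ^~ fg) => y fgy /fgy /= ->.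
Qed.

Lemma Yintegrable_cst k : Yintegrable (fun _ => k).
Proof.
have Yfin : (mu Y < +oo)%E by rewrite leb3_Ycell ltry.
exact: measurable_bounded_integrable measurable_Ycell Yfin (measurable_cst _) (bounded_cst _ _).
Qed.

Lemma YintegrableD f g : Yintegrable f -> Yintegrable g -> Yintegrable (fun y => f y + g y).
Proof.
move=> fi gi; apply: eq_integrable measurable_Ycell _ _ _ (integrableD measurable_Ycell fi gi).
by move=> y _ /=; rewrite EFinD.
Qed.

Lemma YintegrableZl k f : Yintegrable f -> Yintegrable (fun y => k * f y).
Proof.
move=> fi; apply: eq_integrable measurable_Ycell _ _ _ (integrableZl measurable_Ycell k fi).
by move=> y _ /=; rewrite EFinM.
Qed.

Lemma Yintegrable_sum (I : finType) (F : I -> pt R -> R) :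
  (forall i, Yintegrable (F i)) -> Yintegrable (fun y => \sum_i F i y).
Proof.
move=> Fi; have := @integrable_sum _ _ _ mu _ measurable_Ycell I (index_enum I) xpredT
  (fun i => EFin \o F i) (fun i _ => Fi i).
apply: eq_integrable measurable_Ycell _ _ _.
by move=> y _ /=; rewrite sumEFin.
Qed.

(* Unlike [integrableMr], only an almost-everywhere bound on [a] is assumed,
   as in [admissible_tensor]. *)
Lemma Yintegrable_ess_bddM (a : pt R -> R) h : measurable_fun Y a ->
  (exists M, {ae mu, forall y, Y y -> `|a y| <= M}) ->
  Yintegrable h -> Yintegrable (fun y => a y * h y).
Proof.
move=> ma [M aM] hi; have mh : measurable_fun Y h.
  by apply/measurable_EFinP; exact: measurable_int hi.
apply/integrableP; split.
  by apply/measurable_EFinP; exact: measurable_funM.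
apply: (@le_lt_trans _ _ (\int[mu]_(y in Y) (`|M|%:E * `|(EFin \o h) y|))%E).
  apply: ae_ge0_le_integral => //.
  - exact: measurable_Ycell.
  - by apply: measurableT_comp => //; apply/measurable_EFinP; exact: measurable_funM.
  - apply: emeasurable_funM; first exact: measurable_cst.
    by apply: measurableT_comp => //; apply/measurable_EFinP.
  - apply: (@filterS _ _ (ae_filter_ringOfSetsType mu) _ _ ^~ aM) => y aMy Yy /=.
    by rewrite lee_fin normrM ler_wpM2r // (le_trans (aMy Yy)) // ler_norm.
have [_ hfin] := integrableP _ _ _ hi.
rewrite ge0_integralZl //.
- exact: lte_mul_pinfty.
- exact: measurable_Ycell.
- by apply: measurableT_comp => //; apply/measurable_EFinP.
Qed.

Lemma L2R_cst k : L2R (fun _ : pt R => k).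
Proof. by split; [exact: measurable_cst | exact: Yintegrable_cst]. Qed.

Lemma L2R_sqr_integrable f : L2R f -> Yintegrable (fun y => f y ^+ 2).
Proof. by case. Qed.

Lemma L2R_add f g : L2R f -> L2R g -> L2R (fun y => f y + g y).
Proof.
move=> fL2 gL2; have [mf _] := fL2; have [mg _] := gL2.
have f2i := L2R_sqr_integrable fL2; have g2i := L2R_sqr_integrable gL2.
split; first exact: measurable_funD.
have := YintegrableD (YintegrableZl 2 f2i) (YintegrableZl 2 g2i).
apply: (le_integrable measurable_Ycell).
  by apply/measurable_EFinP; apply: measurable_funX; exact: measurable_funD.
move=> y _ /=; rewrite !lee_fin ger0_norm ?sqr_ge0 // ger0_norm.
  by have := sqr_ge0 (f y - g y); nra.
by have := sqr_ge0 (f y); have := sqr_ge0 (g y); lra.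
Qed.

Lemma L2R_scale k f : L2R f -> L2R (fun y => k * f y).
Proof.
move=> fL2; have [mf _] := fL2.
split; first by apply: measurable_funM => //; exact: measurable_cst.
apply: eq_integrable measurable_Ycell _ _ _ (YintegrableZl (k ^+ 2) (L2R_sqr_integrable fL2)).
by move=> y _ /=; rewrite exprMn.
Qed.

Lemma Yintegrable_mul_L2R f g : L2R f -> L2R g -> Yintegrable (fun y => f y * g y).
Proof.
move=> fL2 gL2; have [mf _] := fL2; have [mg _] := gL2.
have := YintegrableD (L2R_sqr_integrable fL2) (L2R_sqr_integrable gL2).
apply: (le_integrable measurable_Ycell).
  by apply/measurable_EFinP; exact: measurable_funM.
move=> y _ /=; rewrite !lee_fin [leRHS]ger0_norm ?addr_ge0 ?sqr_ge0 // normrM.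
rewrite -(real_normK (num_real (f y))) -(real_normK (num_real (g y))).
by have := sqr_ge0 (`|f y| - `|g y|); rewrite sqrrB; nra.
Qed.

Definition L2M (F : pt R -> 'M[R]_3) := forall i j, L2R (fun y => F y i j).

Lemma L2M_cst (W : 'M[R]_3) : L2M (fun _ => W).
Proof. by move=> i j; exact: L2R_cst. Qed.

Lemma L2M_symR G : L2M G -> L2M (fun y => symR (G y)).
Proof.
move=> GL2 i j; have := L2R_scale 2^-1 (L2R_add (GL2 i j) (GL2 j i)).
by congr L2R; apply: funext => y; rewrite !mxE.
Qed.

Lemma L2M_shift_symR (xi : 'M[R]_3) G : L2M G -> L2M (fun y => xi + symR (G y)).
Proof.
move=> GL2 i j; have := L2R_add (L2R_cst (xi i j)) (L2M_symR GL2 i j).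
by congr L2R; apply: funext => y; rewrite [RHS]mxE.
Qed.

Lemma Yintegrable_ddotR_tappR A nu P Q : admissible_tensor A nu -> L2M P -> L2M Q ->
  Yintegrable (fun y => ddotR (tappR (A y) (P y)) (Q y)).
Proof.
case=> _ [_ [mA [[M AM] _]]] PL2 QL2.
apply: Yintegrable_sum => i; apply: Yintegrable_sum => j.
have -> : (fun y => tappR (A y) (P y) i j * Q y i j) =
    (fun y => \sum_k \sum_l A y i k j l * (P y k l * Q y i j)).
  apply: funext => y; rewrite mxE big_distrl; apply: eq_bigr => k _.
  by rewrite big_distrl; apply: eq_bigr => l _; rewrite mulrA.
apply: Yintegrable_sum => k; apply: Yintegrable_sum => l.
apply: Yintegrable_ess_bddM; [exact: mA | | exact: Yintegrable_mul_L2R].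
exists M; apply: (@filterS _ _ (ae_filter_ringOfSetsType mu) _ _ ^~ AM) => y AMy Yy.
exact: AMy.
Qed.

(** * Cell problems *)

Lemma H1perC_Re u G : H1perC u G -> H1perR (fun y => ReM (u y)) (fun y => ReM (G y)).
Proof.
case=> uL2 [GL2 weak]; split; [|split].
- by move=> k; under eq_fun => y do rewrite mxE; exact: (uL2 k).1.
- by move=> k j; under eq_fun => y do rewrite mxE; exact: (GL2 k j).1.
- move=> phi phiC k j; have := congr1 Re (weak phi phiC k j).
  rewrite ReN !Re_Cint => weakRe.
  under Rint_ext => y do rewrite mxE -Re_mul_toC.
  by under [in RHS]Rint_ext => y do rewrite mxE -Re_mul_toC.
Qed.

Lemma H1perC_Im u G : H1perC u G -> H1perR (fun y => ImM (u y)) (fun y => ImM (G y)).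
Proof.
case=> uL2 [GL2 weak]; split; [|split].
- by move=> k; under eq_fun => y do rewrite mxE; exact: (uL2 k).2.
- by move=> k j; under eq_fun => y do rewrite mxE; exact: (GL2 k j).2.
- move=> phi phiC k j; have := congr1 Im (weak phi phiC k j).
  rewrite ImN !Im_Cint => weakIm.
  under Rint_ext => y do rewrite mxE -Im_mul_toC.
  by under [in RHS]Rint_ext => y do rewrite mxE -Im_mul_toC.
Qed.

Lemma H1perR_toC v Gv :
  H1perR v Gv -> H1perC (fun y => map_mx (@toC R) (v y)) (fun y => map_mx (@toC R) (Gv y)).
Proof.
case=> vL2 [GvL2 weak]; split; [|split].
- by move=> k; split; under eq_fun => y do rewrite mxE /=; [exact: vL2 | exact: L2R_cst].
- by move=> k j; split; under eq_fun => y do rewrite mxE /=; [exact: GvL2 | exact: L2R_cst].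
- move=> phi phiC k j; apply: complex_ext; rewrite ?ReN ?ImN ?Re_Cint ?Im_Cint.
  + under Rint_ext => y do rewrite mxE Re_toC_mul /=.
    under [in RHS]Rint_ext => y do rewrite mxE Re_toC_mul /=.
    exact: weak.
  + under Rint_ext => y do rewrite mxE Im_toC_mul /= mulr0.
    by under [in RHS]Rint_ext => y do rewrite mxE Im_toC_mul /= mulr0; rewrite Rint_cst oppr0.
Qed.

Lemma chi_corrector_Re A chi c u G : chi_corrector A chi c u G ->
  real_corrector A (ReM (iX chi c)) (fun y => ReM (u y)) (fun y => ReM (G y)).
Proof.
case=> uH1 [u0 orth]; split; [exact: H1perC_Re | split].
- move=> k; under Rint_ext => y do rewrite mxE.
  by rewrite -Re_Cint u0.
- move=> v Gv vH1; have := congr1 Re (orth _ _ (H1perR_toC vH1)).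
  rewrite Re_Cint; under Rint_ext => y do rewrite Re_ddotC_toC ReM_symC_add.
  by [].
Qed.

Lemma chi_corrector_Im A chi c u G : chi_corrector A chi c u G ->
  real_corrector A (ImM (iX chi c)) (fun y => ImM (u y)) (fun y => ImM (G y)).
Proof.
case=> uH1 [u0 orth]; split; [exact: H1perC_Im | split].
- move=> k; under Rint_ext => y do rewrite mxE.
  by rewrite -Im_Cint u0.
- move=> v Gv vH1; have := congr1 Im (orth _ _ (H1perR_toC vH1)).
  rewrite Im_Cint; under Rint_ext => y do rewrite Im_ddotC_toC ImM_symC_add.
  by [].
Qed.

Section HomogenizedTensor.
Variables (A : pt R -> tensor R) (nu : R) (Ahom : tensor R).
Hypotheses (admA : admissible_tensor A nu) (AhomP : is_Ahom A Ahom).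

Lemma Ahom_energy xi zeta u Gu v Gv : xi^T = xi ->
  real_corrector A xi u Gu -> real_corrector A zeta v Gv ->
  ddotR (tappR Ahom xi) zeta =
  Defs.Rint (fun y => ddotR (tappR (A y) (xi + symR (Gu y))) (zeta + symR (Gv y))).
Proof.
move=> xi_sym cu cv; have [[_ [GuL2 _]] [_ orth]] := cu; have [vH1 _] := cv.
have [_ [GvL2 _]] := vH1.
under [RHS]Rint_ext => y do rewrite ddotRDr.
rewrite RintD; first by rewrite (orth _ _ vH1) addr0 (AhomP xi_sym cu).
- exact: Yintegrable_ddotR_tappR admA (L2M_shift_symR xi GuL2) (L2M_cst zeta).
- exact: Yintegrable_ddotR_tappR admA (L2M_shift_symR xi GuL2) (L2M_symR GvL2).
Qed.

Lemma Ahom_sym xi zeta u Gu v Gv : xi^T = xi -> zeta^T = zeta ->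
  real_corrector A xi u Gu -> real_corrector A zeta v Gv ->
  ddotR (tappR Ahom xi) zeta = ddotR (tappR Ahom zeta) xi.
Proof.
move=> xi_sym zeta_sym cu cv.
rewrite (Ahom_energy xi_sym cu cv) (Ahom_energy zeta_sym cv cu).
have [[_ [GuL2 _]] _] := cu; have [[_ [GvL2 _]] _] := cv.
apply: Rint_ae_ext.
- exact: Yintegrable_ddotR_tappR admA (L2M_shift_symR xi GuL2) (L2M_shift_symR zeta GvL2).
- exact: Yintegrable_ddotR_tappR admA (L2M_shift_symR zeta GvL2) (L2M_shift_symR xi GuL2).
have [_ [_ [_ [_ Asym]]]] := admA.
apply: (@filterS _ _ (ae_filter_ringOfSetsType mu) _ _ ^~ Asym) => y Asymy Yy.
by apply: ddotR_tappR_swap => i k j l; case: (Asymy Yy) => /(_ i k j l) [].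
Qed.

Lemma Ahom_chi_formE chi c d u G : chi_corrector A chi c u G ->
  Ahom_chi_form A chi c d G = ddotC (tappC Ahom (iX chi c)) (conjM (iX chi d)).
Proof.
move=> cc; have cRe := chi_corrector_Re cc; have cIm := chi_corrector_Im cc.
have [[_ [ReGL2 _]] _] := cRe; have [[_ [ImGL2 _]] _] := cIm.
have intRe Z := Yintegrable_ddotR_tappR admA (L2M_shift_symR _ ReGL2) (L2M_cst Z).
have intIm Z := Yintegrable_ddotR_tappR admA (L2M_shift_symR _ ImGL2) (L2M_cst Z).
rewrite /Ahom_chi_form; apply: complex_ext.
- rewrite Re_Cint Re_ddotC_conjM ReM_tappC ImM_tappC.
  under Rint_ext => y do
    rewrite Re_ddotC_conjM ReM_tappC ImM_tappC ReM_symC_add ImM_symC_add.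
  by rewrite RintD // (AhomP (ReM_iX_sym chi c) cRe) (AhomP (ImM_iX_sym chi c) cIm).
- rewrite Im_Cint Im_ddotC_conjM ReM_tappC ImM_tappC.
  under Rint_ext => y do
    rewrite Im_ddotC_conjM ReM_tappC ImM_tappC ReM_symC_add ImM_symC_add.
  by rewrite RintB // (AhomP (ReM_iX_sym chi c) cRe) (AhomP (ImM_iX_sym chi c) cIm).
Qed.

Lemma Ahom_chi_form_diag chi c u G : chi_corrector A chi c u G ->
  Ahom_chi_form A chi c c G = toC (ddotR (tappR Ahom (ReM (iX chi c))) (ReM (iX chi c))
                                   + ddotR (tappR Ahom (ImM (iX chi c))) (ImM (iX chi c))).
Proof.
move=> cc; rewrite (Ahom_chi_formE _ cc) ddotC_conjM_diag //.
apply: (Ahom_sym (ReM_iX_sym chi c) (ImM_iX_sym chi c)).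
- exact: chi_corrector_Re cc.
- exact: chi_corrector_Im cc.
Qed.

End HomogenizedTensor.

(** * The coercivity constant *)

Lemma cabs2_ge0 (z : C) : 0 <= cabs2 z.
Proof. by rewrite addr_ge0 ?sqr_ge0. Qed.

Lemma normC2_ge0 c : 0 <= normC2 c.
Proof. by apply: sumr_ge0 => k _; exact: cabs2_ge0. Qed.

Lemma normR2_ge0 chi : 0 <= normR2 chi.
Proof. by apply: sumr_ge0 => k _; exact: sqr_ge0. Qed.

Lemma sum_cabs2_Xchi_bounds (csr Csr : R) chi c : 0 <= csr ->
  csr * Num.sqrt (normR2 chi) * L2normC3 (fun _ => c) <= L2normCM (fun _ => Xchi chi c)
    <= Csr * Num.sqrt (normR2 chi) * L2normC3 (fun _ => c) ->
  csr ^+ 2 * (normR2 chi * normC2 c) <= \sum_i \sum_j cabs2 (Xchi chi c i j)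
    <= Csr ^+ 2 * (normR2 chi * normC2 c).
Proof.
rewrite /L2normC3 /L2normCM !Rint_cst => csr0 /andP[lo up].
have S0 : 0 <= \sum_i \sum_j cabs2 (Xchi chi c i j).
  by do 2![apply: sumr_ge0 => ? _]; exact: cabs2_ge0.
have sqE (k : R) : (k * Num.sqrt (normR2 chi) * Num.sqrt (normC2 c)) ^+ 2
    = k ^+ 2 * (normR2 chi * normC2 c).
  by rewrite !exprMn !sqr_sqrtr ?normR2_ge0 ?normC2_ge0 // mulrA.
have lo_ge0 : 0 <= csr * Num.sqrt (normR2 chi) * Num.sqrt (normC2 c).
  by rewrite !mulr_ge0 ?sqrtr_ge0.
have up_ge0 := le_trans (sqrtr_ge0 _) up.
by rewrite -!sqE -(sqr_sqrtr S0) !ler_sqr ?nnegrE ?sqrtr_ge0 // lo up.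
Qed.

Definition nu1 (nuh cl cu : R) := Num.min (nuh * cl ^+ 2) (nuh / cu ^+ 2).

Lemma nu1_gt0 nuh cl cu : 0 < nuh -> 0 < cl -> 0 < cu -> 0 < nu1 nuh cl cu.
Proof. by move=> *; rewrite lt_min mulr_gt0 ?divr_gt0 ?exprn_gt0. Qed.

Lemma nu1_sandwich nuh cl cu N S Q : 0 < nuh -> 0 < cl -> 0 < cu -> 0 <= N ->
  cl ^+ 2 * N <= S <= cu ^+ 2 * N -> nuh * S <= Q <= nuh^-1 * S ->
  nu1 nuh cl cu * N <= Q <= (nu1 nuh cl cu)^-1 * N.
Proof.
move=> nuh0 cl0 cu0 N0 /andP[S_lo S_up] /andP[Q_lo Q_up].
have nu1_lo : nu1 nuh cl cu <= nuh * cl ^+ 2 by rewrite ge_min lexx.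
have nu1_up : (nuh / cu ^+ 2)^-1 <= (nu1 nuh cl cu)^-1.
  by rewrite lef_pV2 ?posrE ?nu1_gt0 ?divr_gt0 ?exprn_gt0 // ge_min lexx orbT.
rewrite invf_div in nu1_up; apply/andP; split.
- apply: le_trans (le_trans (ler_wpM2l (ltW nuh0) S_lo) Q_lo).
  by rewrite mulrA; exact: ler_wpM2r.
- have nuhV_ge0 : 0 <= nuh^-1 by rewrite invr_ge0 ltW.
  apply: le_trans Q_up (le_trans (ler_wpM2l nuhV_ge0 S_up) _).
  by rewrite mulrA [nuh^-1 * _]mulrC; exact: ler_wpM2r.
Qed.

End CellProblems.

Theorem proposition5p5 (R : realType) :
  exists nu1 : R -> R -> R -> R,
  (forall a b c : R, 0 < a -> 0 < b -> 0 < c -> 0 < nu1 a b c) /\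
  forall (A : pt R -> tensor R) (Ahom : tensor R) (nu nuhom csr Csr : R),
    admissible_tensor A nu ->
    is_Ahom A Ahom ->
    0 < nuhom ->
    (forall xi : 'M[R]_3, xi^T = xi ->
       nuhom * frobR2 xi <= ddotR (tappR Ahom xi) xi <= nuhom^-1 * frobR2 xi) ->
    0 < csr -> 0 < Csr ->
    (forall chi : 'cV[R]_3, in_Yprime chi ->
     forall u : pt R -> 'cV[complex R]_3, (forall k, L2C (fun y => u y k 0)) ->
       csr * Num.sqrt (normR2 chi) * L2normC3 u <= L2normCM (fun y => Xchi chi (u y))
       <= Csr * Num.sqrt (normR2 chi) * L2normC3 u) ->
    (forall chi : 'cV[R]_3, in_Yprime chi ->
     forall (c d : 'cV[complex R]_3) u G, chi_corrector A chi c u G ->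
       dotC (iXadj chi (tappC Ahom (iX chi c))) d = Ahom_chi_form A chi c d G) /\
    (forall chi : 'cV[R]_3, in_Yprime chi ->
     forall (c : 'cV[complex R]_3) u G, chi_corrector A chi c u G ->
       toC (nu1 nuhom csr Csr * normR2 chi * normC2 c) <= Ahom_chi_form A chi c c G
       <= toC ((nu1 nuhom csr Csr)^-1 * normR2 chi * normC2 c)).
Proof.
exists (@nu1 R); split; first exact: nu1_gt0.
move=> A Ahom nu nuh csr Csr admA AhomP nuh0 Ahom_coer csr0 Csr0 X_bounds; split.
  by move=> chi _ c d u G cc; rewrite dotC_iXadj (Ahom_chi_formE admA AhomP _ cc).
move=> chi chiY c u G cc.
rewrite (Ahom_chi_form_diag admA AhomP cc) /toC !complexr0 !lecR -!mulrA.
apply: nu1_sandwich => //; first by rewrite mulr_ge0 ?normR2_ge0 ?normC2_ge0.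
- apply: sum_cabs2_Xchi_bounds (ltW csr0) _.
  exact: X_bounds chiY (fun _ : pt R => c) (fun k => conj (L2R_cst _) (L2R_cst _)).
- by rewrite -sum_cabs2_iX; apply: coercive_ReM_ImM Ahom_coer (iX_sym chi c).
Qed.
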